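(* Assume $F\succeq0$, and for $k\ge1$ let $X_k:=V_kT_k^{-1}V_k^*$ (with $X_0:=0$). Then for every $k\ge1$ there exists $\ell\in\mathbb C^k$ with nonzero last entry such that $X_k-X_{k-1}=V_k\ell\ell^*V_k^*$. Consequently $X_k-X_{k-1}$ has rank at most one (rank exactly one if $V_k$ has full column rank), and $X_k\succeq X_{k-1}$.
   Context: Let $A\in\mathbb C^{n\times n}$, let $C\in\mathbb C^{1\times n}$, and let $F\in\mathbb C^{n\times n}$ be Hermitian; $M^*$ denotes the conjugate transpose, $\succeq0$ denotes Hermitian positive semidefinite, and $X\succeq Y$ means $X-Y\succeq0$. Let $\alpha_1,\alpha_2,\dots\in\mathbb C$ be pairwise distinct with $\operatorname{Re}(\alpha_j)>0$ and $-A^*+\alpha_jI$ nonsingular. Set $$V_k=\big[(-A^*+\alpha_1I)^{-1}C^*,\dots,(-A^*+\alpha_kI)^{-1}C^*\big]\in\mathbb C^{n\times k},$$ and let $T_k\in\mathbb C^{k\times k}$ be the Hermitian matrix with entries $T_k(i,j)=\dfrac{1+(V_k^*FV_k)_{ij}}{\bar\alpha_i+\alpha_j}$, i.e. the unique solution of $\Lambda_k^*T+T\Lambda_k=V_k^*FV_k+\mathbf 1\mathbf 1^*$, where $\Lambda_k=\operatorname{diag}(\alpha_1,\dots,\alpha_k)$ and $\mathbf 1=[1,\dots,1]^T$. Under these assumptions $T_k$ is Hermitian positive definite and $T_{k-1}$ is its leading principal $(k-1)\times(k-1)$ submatrix. *)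

(* The complex field C is modelled by an arbitrary
   numClosedFieldType C (algebraically closed field with conjugation ^*
   and the partial order 0 <= z <-> z real nonnegative); this covers C. *)
From HB Require Import structures.
From mathcomp Require Import all_boot all_order all_algebra.
From mathcomp Require Export sesquilinear spectral.
Set Implicit Arguments. Unset Strict Implicit. Unset Printing Implicit Defensive.
Import Order.TTheory GRing.Theory Num.Theory.
Local Open Scope ring_scope.
Local Open Scope sesquilinear_scope.

Section Defs.
Variable C : numClosedFieldType.

Definition ctr m n (M : 'M[C]_(m, n)) : 'M[C]_(n, m) := M ^t*.

Definition psdmx n (M : 'M[C]_n) : Prop :=
  ctr M = M /\ forall v : 'cV[C]_n, 0 <= (ctr v *m M *m v) 0 0.

(* alpha : nat -> C, with alpha j = alpha_{j+1} of the paper (0-based). *)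
Definition Vk n (A : 'M[C]_n) (Cr : 'M[C]_(1, n)) (alpha : nat -> C) (k : nat)
  : 'M[C]_(n, k) :=
  \matrix_(i < n, j < k)
     ((invmx (- ctr A + (alpha j)%:M) *m ctr Cr) i 0).

Definition Tk n (A : 'M[C]_n) (Cr : 'M[C]_(1, n)) (F : 'M[C]_n)
  (alpha : nat -> C) (k : nat) : 'M[C]_k :=
  let V := Vk A Cr alpha k in
  \matrix_(i < k, j < k)
     ((1 + (ctr V *m F *m V) i j) / ((alpha i)^* + alpha j)).

Definition Xk n (A : 'M[C]_n) (Cr : 'M[C]_(1, n)) (F : 'M[C]_n)
  (alpha : nat -> C) (k : nat) : 'M[C]_n :=
  match k with
  | 0 => 0
  | _ => Vk A Cr alpha k *m invmx (Tk A Cr F alpha k) *m ctr (Vk A Cr alpha k)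
  end.
End Defs.

(* Write T := T_(m+1), whose leading m x m block is T_m = E^* T E, where E
   embeds the first m coordinates and e is the last basis vector.  With the
   Schur vector w := e - E T_m^(-1) E^* T e and the Schur complement
   s := w^* T w, the bordered-inverse formula reads
     T^(-1) = E T_m^(-1) E^* + s^(-1) w w^*,
   so X_(m+1) - X_m = s^(-1) V w w^* V^* with V := V_(m+1), and w has last
   entry 1.  Everything then hinges on s > 0, i.e. on T_k being positive
   definite: T_k solves the Lyapunov equation
     Lambda^* T + T Lambda = V^* F V + 1 1^*
   with distinct nodes in the right half plane, and a Vandermonde argument
   shows that any Hermitian solution has a trivial kernel, whence (looking at
   eigenvectors) only positive eigenvalues.  Taking l := s^(-1/2) w gives the
   decomposition; rank and semidefiniteness follow for any [u u^*]. *)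
From HB Require Import structures.
From mathcomp Require Import all_boot all_order all_algebra.
From mathcomp Require Import ring.
Set Implicit Arguments. Unset Strict Implicit. Unset Printing Implicit Defensive.
Import Order.TTheory GRing.Theory Num.Theory.
Local Open Scope ring_scope.

Section ConjTranspose.
Variable C : numClosedFieldType.

Lemma ctrE m n (M : 'M[C]_(m, n)) i j : ctr M i j = (M j i)^*.
Proof. by rewrite /ctr !mxE. Qed.

Lemma ctrK m n (M : 'M[C]_(m, n)) : ctr (ctr M) = M.
Proof. by apply/matrixP=> i j; rewrite !ctrE conjCK. Qed.

Lemma ctrM m n p (A : 'M[C]_(m, n)) (B : 'M[C]_(n, p)) :
  ctr (A *m B) = ctr B *m ctr A.
Proof. by rewrite /ctr trmx_mul map_mxM. Qed.

Lemma ctrD m n (A B : 'M[C]_(m, n)) : ctr (A + B) = ctr A + ctr B.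
Proof. by rewrite /ctr linearD /= map_mxD. Qed.

Lemma ctrN m n (A : 'M[C]_(m, n)) : ctr (- A) = - ctr A.
Proof. by rewrite /ctr linearN /= map_mxN. Qed.

Lemma ctrZ m n (a : C) (A : 'M[C]_(m, n)) : ctr (a *: A) = a^* *: ctr A.
Proof. by apply/matrixP=> i j; rewrite !(ctrE, mxE) rmorphM. Qed.

Lemma ctr1 n : ctr (1%:M : 'M[C]_n) = 1%:M.
Proof. by rewrite /ctr trmx1 map_mx1. Qed.

Lemma ctr0 m n : ctr (0 : 'M[C]_(m, n)) = 0.
Proof. by rewrite /ctr trmx0 map_mx0. Qed.

Lemma ctr_inv n (A : 'M[C]_n) : ctr (invmx A) = invmx (ctr A).
Proof. by rewrite /ctr trmx_inv map_invmx. Qed.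

Lemma ctr_delta m n (i : 'I_m) (j : 'I_n) :
  ctr (delta_mx i j : 'M[C]_(m, n)) = delta_mx j i.
Proof. by apply/matrixP=> k l; rewrite ctrE !mxE rmorph_nat andbC. Qed.

End ConjTranspose.

Section Positivity.
Variable C : numClosedFieldType.

Definition evec n (i : 'I_n) : 'cV[C]_n := delta_mx i 0.

Lemma evec_coord n (i : 'I_n) (v : 'cV[C]_n) : (ctr (evec i) *m v) 0 0 = v i 0.
Proof.
rewrite /evec ctr_delta mxE (bigD1 i) //= big1 ?addr0.
  by rewrite mxE !eqxx mul1r.
by move=> j /negbTE ji; rewrite mxE ji mul0r.
Qed.

Lemma evec_unit n (i : 'I_n) : ctr (evec i) *m evec i = 1%:M.
Proof.
by rewrite [LHS]mx11_scalar evec_coord /evec mxE !eqxx.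
Qed.

Definition pdmx n (M : 'M[C]_n) : Prop :=
  forall x : 'cV[C]_n, x != 0 -> 0 < (ctr x *m M *m x) 0 0.

Lemma pd_unit n (T : 'M[C]_n) : pdmx T -> T \in unitmx.
Proof.
move=> T_pd; rewrite unitmxE unitfE; apply/det0P => -[v v0 vT0].
have cv0 : ctr v != 0 by apply: contraNneq v0 => cv0; rewrite -[v]ctrK cv0 ctr0.
by have := T_pd _ cv0; rewrite ctrK vT0 mul0mx mxE ltxx.
Qed.

Lemma cnorm2E n (y : 'cV[C]_n) : (ctr y *m y) 0 0 = \sum_i `|y i 0| ^+ 2.
Proof. by rewrite mxE; apply: eq_bigr => i _; rewrite ctrE normCKC. Qed.

Lemma cnorm2_ge0 n (y : 'cV[C]_n) : 0 <= (ctr y *m y) 0 0.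
Proof. by rewrite cnorm2E sumr_ge0 // => i _; rewrite exprn_ge0. Qed.

Lemma cnorm2_eq0 n (y : 'cV[C]_n) : (ctr y *m y) 0 0 = 0 -> y = 0.
Proof.
rewrite cnorm2E => /psumr_eq0P y0; apply/matrixP=> i j; rewrite ord1 mxE.
have /eqP := y0 (fun _ _ => exprn_ge0 _ (normr_ge0 _)) i isT.
by rewrite expf_eq0 /= normr_eq0 => /eqP.
Qed.

Lemma outer_psd n (u : 'cV[C]_n) : psdmx (u *m ctr u).
Proof.
split=> [|v]; first by rewrite ctrM ctrK.
have -> : ctr v *m (u *m ctr u) *m v = ctr (ctr u *m v) *m (ctr u *m v).
  by rewrite ctrM ctrK !mulmxA.
exact: cnorm2_ge0.
Qed.

Lemma psd_congr n k (F : 'M[C]_n) (V : 'M[C]_(n, k)) :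
  psdmx F -> psdmx (ctr V *m F *m V).
Proof.
case=> Fh Fp; split=> [|x]; first by rewrite !ctrM ctrK Fh mulmxA.
by have := Fp (V *m x); rewrite ctrM !mulmxA.
Qed.

Lemma herm_spectral n (H : 'M[C]_n) : ctr H = H ->
  exists (P : 'M[C]_n) (d : 'rV[C]_n),
   [/\ P *m ctr P = 1%:M, ctr P *m P = 1%:M, H = ctr P *m diag_mx d *m P
     & forall i, (d 0 i)^* = d 0 i].
Proof.
move=> Hh.
have Hs : H \is hermsymmx by apply/is_hermitianmxP; rewrite expr0 scale1r.
have U := spectral_unitarymx H.
exists (spectralmx H), (spectral_diag H); split.
- exact/unitarymxP.
- by rewrite /ctr -invmx_unitary // mulVmx // spectral_unit.
- by rewrite /ctr -invmx_unitary //; apply/orthomx_spectralP/hermitian_normalmx.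
- move=> i; apply: conj_Creal.
  by have /mxOverP := hermitian_spectral_diag_real Hs; apply.
Qed.

Lemma quad_diag n (P : 'M[C]_n) (d : 'rV[C]_n) (y : 'cV[C]_n) :
  (ctr y *m (ctr P *m diag_mx d *m P) *m y) 0 0
   = \sum_i d 0 i * `|(P *m y) i 0| ^+ 2.
Proof.
rewrite !mulmxA -ctrM -!mulmxA mulmxA mxE; apply: eq_bigr => i _.
by rewrite mul_mx_diag !mxE normCKC mulrCA mulrA.
Qed.

Lemma diag_eigenvector n (P : 'M[C]_n) (d : 'rV[C]_n) i :
  P *m ctr P = 1%:M ->
  (ctr P *m diag_mx d *m P) *m (ctr P *m evec i) =
  d 0 i *: (ctr P *m evec i).
Proof.
move=> PP; rewrite -!mulmxA [P *m (ctr P *m _)]mulmxA PP mul1mx scalemxAr.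
congr (_ *m _); apply/matrixP=> j k; rewrite mul_diag_mx !mxE.
by case: eqP => [->|_]; rewrite ?mulr1 ?mulr0.
Qed.

Lemma herm_pd n (T : 'M[C]_n) : ctr T = T ->
  (forall (u : 'cV[C]_n) (d : C), u != 0 -> d^* = d -> T *m u = d *: u -> 0 < d) ->
  pdmx T.
Proof.
move=> Th eig_pos; have [P [d [PP PP' TE dr]]] := herm_spectral Th.
have dpos i : 0 < d 0 i.
  apply: (eig_pos (ctr P *m evec i)) (dr i) _; last by rewrite TE diag_eigenvector.
  apply: contraNneq (@oner_neq0 C) => u0.
  have := congr1 (fun M => (P *m M) i 0) u0.
  by rewrite /= mulmxA PP mul1mx mulmx0 !mxE !eqxx mulr1n => ->.
move=> x x0; rewrite TE quad_diag.
have Px0 : P *m x != 0.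
  by apply: contraNneq x0 => Px0; rewrite -(mul1mx x) -PP' -mulmxA Px0 mulmx0.
have term_ge0 j : true -> 0 <= d 0 j * `|(P *m x) j 0| ^+ 2.
  by move=> _; rewrite mulr_ge0 ?exprn_ge0 ?(ltW (dpos j)).
rewrite lt_def sumr_ge0 // andbT; apply: contraNneq Px0 => /psumr_eq0P.
move=> /(_ term_ge0) sum0; apply/eqP/matrixP=> j k; rewrite ord1 [RHS]mxE.
have /eqP := sum0 j isT.
by rewrite mulf_eq0 (gt_eqF (dpos j)) expf_eq0 /= normr_eq0 => /eqP.
Qed.

Lemma psd_isotropic n (F : 'M[C]_n) (y : 'cV[C]_n) : psdmx F ->
  (ctr y *m F *m y) 0 0 = 0 -> F *m y = 0.
Proof.
move=> [Fh Fp]; have [P [d [PP _ FE _]]] := herm_spectral Fh.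
have dge0 i : 0 <= d 0 i.
  have := Fp (ctr P *m evec i); rewrite FE quad_diag mulmxA PP mul1mx.
  rewrite (bigD1 i) //= big1 ?addr0 ?mxE ?eqxx ?normr1 ?expr1n ?mulr1 //.
  by move=> j /negbTE ji; rewrite mxE ji normr0 expr0n mulr0.
rewrite FE quad_diag => /psumr_eq0P sum0.
have {}sum0 i : d 0 i * `|(P *m y) i 0| ^+ 2 = 0.
  by apply: sum0 => // j _; rewrite mulr_ge0 ?exprn_ge0.
suff dPy0 : diag_mx d *m (P *m y) = 0 by rewrite -!mulmxA dPy0 mulmx0.
apply/matrixP=> i j; rewrite ord1 mul_diag_mx mxE [RHS]mxE.
by have /eqP := sum0 i; rewrite mulf_eq0 expf_eq0 /= normr_eq0 => /orP[]/eqP->;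
  rewrite ?mul0r ?mulr0.
Qed.

Lemma outer_sqrt_scale n (c : C) (w : 'cV[C]_n) : 0 <= c ->
  c *: (w *m ctr w) = (sqrtC c *: w) *m ctr (sqrtC c *: w).
Proof.
move=> c_ge0; rewrite ctrZ -scalemxAr -scalemxAl scalerA.
by rewrite conj_Creal ?sqrtC_real // -expr2 sqrtCK.
Qed.

Lemma rank_outer_le1 n (u : 'cV[C]_n) : (\rank (u *m ctr u) <= 1)%N.
Proof. exact: leq_trans (mxrankM_maxl _ _) (rank_leq_col _). Qed.

Lemma rank_outer_eq1 n (u : 'cV[C]_n) : u != 0 -> \rank (u *m ctr u) = 1%N.
Proof.
move=> u0; apply/eqP; rewrite eqn_leq rank_outer_le1 lt0n mxrank_eq0.
apply: contraNneq u0 => uu0; apply/eqP/cnorm2_eq0.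
by rewrite -trace_mx11 -mxtrace_mulC uu0 mxtrace0.
Qed.

Lemma full_col_rank_mul_neq0 n k (V : 'M[C]_(n, k)) (l : 'cV[C]_k) :
  \rank V = k -> l != 0 -> V *m l != 0.
Proof.
move=> V_rank l0; rewrite -trmx_eq0 trmx_mul mulmx_free_eq0 ?trmx_eq0 //.
by rewrite /row_free mxrank_tr V_rank.
Qed.

End Positivity.

Section Lyapunov.
Variable C : numClosedFieldType.

(* A vector whose moments [sum_i a_i^k x_i] all vanish is zero when the nodes
   [a_i] are distinct (invertibility of the Vandermonde matrix). *)
Lemma vandermonde_zero K (a : 'I_K -> C) (x : 'cV[C]_K) :
  injective a -> (forall k, \sum_i a i ^+ k * x i 0 = 0) -> x = 0.
Proof.
move=> a_inj moments0; apply/matrixP => i0 j; rewrite ord1 mxE.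
pose p := \prod_(j | j != i0) ('X - (a j)%:P).
have p_sum : \sum_i p.[a i] * x i 0 = 0.
  under eq_bigr do rewrite horner_coef mulr_suml.
  rewrite exchange_big big1 // => l _.
  transitivity (p`_l * \sum_i a i ^+ l * x i 0); last by rewrite moments0 mulr0.
  by rewrite mulr_sumr; apply: eq_bigr => i _; rewrite mulrA.
rewrite (bigD1 i0) //= big1 ?addr0 in p_sum; last first.
  by move=> i ii0; rewrite horner_prod (bigD1 i) //= hornerXsubC subrr !mul0r.
move/eqP: p_sum; rewrite mulf_eq0 => /orP[|/eqP//].
rewrite horner_prod prodf_seq_eq0 => /hasP[k /= _ /andP[ki0]].
by rewrite hornerXsubC subr_eq0 => /eqP/a_inj ki0'; rewrite ki0' eqxx in ki0.
Qed.

Definition diagC K (a : 'I_K -> C) : 'M[C]_K := diag_mx (\row_i a i).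
Definition ones K : 'cV[C]_K := const_mx 1.

Lemma ctr_diagC K (a : 'I_K -> C) : ctr (diagC a) = diagC (fun i => (a i)^*).
Proof.
by apply/matrixP=> i j; rewrite ctrE !mxE rmorphMn eq_sym; case: eqP => [->|].
Qed.

Lemma quad_diagC K (a : 'I_K -> C) (u : 'cV[C]_K) :
  (ctr u *m diagC a *m u) 0 0 = \sum_i a i * `|u i 0| ^+ 2.
Proof.
rewrite -mulmxA mxE; apply: eq_bigr => i _.
by rewrite ctrE /diagC mul_diag_mx !mxE normCKC mulrCA.
Qed.

Lemma ones_dot K (x : 'cV[C]_K) : (ctr (ones K) *m x) 0 0 = \sum_i x i 0.
Proof. by rewrite mxE; apply: eq_bigr => i _; rewrite ctrE mxE conjC1 mul1r. Qed.

Variables (K : nat) (a : 'I_K -> C) (T H : 'M[C]_K).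
Hypothesis a_inj : injective a.
Hypothesis a_re : forall i, 0 < 'Re (a i).
Hypothesis T_herm : ctr T = T.
Hypothesis H_psd : psdmx H.
Hypothesis T_lyap :
  ctr (diagC a) *m T + T *m diagC a = H + ones K *m ctr (ones K).

Lemma lyap_rhs_quad (x : 'cV[C]_K) :
  (ctr x *m (H + ones K *m ctr (ones K)) *m x) 0 0
  = (ctr x *m H *m x) 0 0
    + (ctr (ctr (ones K) *m x) *m (ctr (ones K) *m x)) 0 0.
Proof.
by rewrite mulmxDr mulmxDl mxE; congr (_ + _); rewrite ctrM ctrK !mulmxA.
Qed.

Lemma lyap_rhs_isotropic (x : 'cV[C]_K) :
  (ctr x *m (H + ones K *m ctr (ones K)) *m x) 0 0 = 0 ->
  (H + ones K *m ctr (ones K)) *m x = 0 /\ \sum_i x i 0 = 0.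
Proof.
have [_ H_ge0] := H_psd.
rewrite lyap_rhs_quad => /eqP; rewrite paddr_eq0 ?cnorm2_ge0 //.
case/andP => /eqP/(psd_isotropic H_psd) Hx0 /eqP/cnorm2_eq0 ones_x0.
split; last by rewrite -ones_dot ones_x0 mxE.
by rewrite mulmxDl -mulmxA Hx0 ones_x0 mulmx0 addr0.
Qed.

(* [T] is injective: its kernel is [Lambda]-invariant and orthogonal to [1],
   so every vector in it has vanishing moments. *)
Lemma lyap_ker (x : 'cV[C]_K) : T *m x = 0 -> x = 0.
Proof.
have ker_step (y : 'cV[C]_K) :
    T *m y = 0 -> T *m (diagC a *m y) = 0 /\ \sum_i y i 0 = 0.
  move=> Ty0.
  have Gy : (ctr y *m (H + ones K *m ctr (ones K)) *m y) 0 0 = 0.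
    rewrite -T_lyap mulmxDr mulmxDl -!mulmxA Ty0 !mulmx0 add0r mulmxA.
    by rewrite -{1}T_herm -ctrM Ty0 ctr0 mul0mx mxE.
  have [Gy0 ->] := lyap_rhs_isotropic Gy; split=> //.
  by move: Gy0; rewrite -T_lyap mulmxDl -mulmxA Ty0 mulmx0 add0r -mulmxA.
move=> Tx0; pose y k := iter k (mulmx (diagC a)) x.
have Ty0 k : T *m y k = 0 by elim: k => [|k IHk] //=; case: (ker_step _ IHk).
have yE k i : y k i 0 = a i ^+ k * x i 0.
  elim: k => [|k IHk] /=; first by rewrite expr0 mul1r.
  by rewrite mul_diag_mx !mxE -/(y k) IHk exprS mulrA.
apply: (vandermonde_zero a_inj) => k.
have [_ sum0] := ker_step _ (Ty0 k).
by rewrite -[RHS]sum0; apply: eq_bigr => i _; rewrite yE.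
Qed.

(* Every real eigenvalue [d] of [T] is positive: for an eigenvector [u], the
   nonnegative number [u^* G u] with [G = H + 1 1^*] equals
   [d * sum_j 2 Re(a_j) |u_j|^2], and [d <> 0] since [T] is injective. *)
Lemma lyap_eigen_pos (u : 'cV[C]_K) (d : C) :
  u != 0 -> d^* = d -> T *m u = d *: u -> 0 < d.
Proof.
move=> u0 d_real Tu.
have re2_gt0 j : 0 < (a j)^* + a j.
  by have := a_re j; rewrite ReE pmulr_lgt0 ?invr_gt0 ?ltr0n // addrC.
have S_gt0 : 0 < \sum_j ((a j)^* + a j) * `|u j 0| ^+ 2.
  have term_ge0 j : true -> 0 <= ((a j)^* + a j) * `|u j 0| ^+ 2.
    by move=> _; rewrite mulr_ge0 ?exprn_ge0 ?(ltW (re2_gt0 j)).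
  rewrite lt_def sumr_ge0 // andbT; apply: contraNneq u0 => /psumr_eq0P.
  move=> /(_ term_ge0) S0; apply/eqP/matrixP=> j k; rewrite ord1 [RHS]mxE.
  have /eqP := S0 j isT.
  by rewrite mulf_eq0 (gt_eqF (re2_gt0 j)) expf_eq0 /= normr_eq0 => /eqP.
have quadE : (ctr u *m (H + ones K *m ctr (ones K)) *m u) 0 0
             = d * \sum_j ((a j)^* + a j) * `|u j 0| ^+ 2.
  have uT : ctr u *m T = d *: ctr u by rewrite -T_herm -ctrM Tu ctrZ d_real.
  rewrite -T_lyap mulmxDr mulmxDl -!mulmxA Tu -scalemxAr mulmxA uT.
  rewrite -scalemxAl -scalemxAr -scalerDr !mulmxA mxE [X in d * X]mxE.
  rewrite ctr_diagC !quad_diagC -big_split; congr (_ * _).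
  by apply: eq_bigr => j _; rewrite mulrDl.
have d0 : d != 0.
  by apply: contraNneq u0 => d0; apply/eqP/lyap_ker; rewrite Tu d0 scale0r.
have [_ H_ge0] := H_psd.
have := addr_ge0 (H_ge0 u) (cnorm2_ge0 (ctr (ones K) *m u)).
by rewrite -lyap_rhs_quad quadE pmulr_lge0 // lt_def d0.
Qed.

Lemma lyap_pd : pdmx T.
Proof. exact: herm_pd T_herm lyap_eigen_pos. Qed.

End Lyapunov.

Section BorderedInverse.
Variable C : numClosedFieldType.

Variables (k m : nat) (T : 'M[C]_k) (E : 'M[C]_(k, m)) (e : 'cV[C]_k).
Hypothesis T_herm : ctr T = T.
Hypothesis E_perp_e : ctr E *m e = 0.
Hypothesis e_unit : ctr e *m e = 1%:M.
Hypothesis E_e_complete : E *m ctr E + e *m ctr e = 1%:M.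
Hypothesis compr_unit : ctr E *m T *m E \in unitmx.

Definition compr_inv : 'M[C]_m := invmx (ctr E *m T *m E).

(* [w = e - E (E^* T E)^-1 E^* T e], the component of [e] that is
   [T]-orthogonal to the range of [E], and the Schur complement [w^* T w]. *)
Definition schur_vec : 'cV[C]_k := e - E *m compr_inv *m ctr E *m T *m e.
Definition schur_compl : C := (ctr schur_vec *m T *m schur_vec) 0 0.

Lemma schur_vec_e : ctr e *m schur_vec = 1%:M.
Proof.
rewrite /schur_vec mulmxBr e_unit -!mulmxA (mulmxA (ctr e) E).
by rewrite -[ctr e *m E]ctrK ctrM ctrK E_perp_e ctr0 mul0mx subr0.
Qed.

Lemma T_schur_vec : T *m schur_vec = schur_compl *: e.
Proof.
have E_Tw : ctr E *m T *m schur_vec = 0.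
  by rewrite /schur_vec mulmxBr !mulmxA mulmxV // mul1mx subrr.
have Tw_e : T *m schur_vec = e *m (ctr e *m T *m schur_vec).
  rewrite -[T *m _]mul1mx -E_e_complete mulmxDl -!mulmxA (mulmxA (ctr E)).
  by rewrite E_Tw mulmx0 add0r.
have w_e : ctr schur_vec *m e = 1%:M.
  by rewrite -[e]ctrK -ctrM schur_vec_e ctr1.
rewrite Tw_e [ctr e *m _ *m _]mx11_scalar mul_mx_scalar; congr (_ *: _).
by rewrite /schur_compl -[in RHS]mulmxA Tw_e mulmxA w_e mul1mx.
Qed.

Lemma bordered_inverse : schur_compl != 0 ->
  invmx T = E *m compr_inv *m ctr E
            + schur_compl^-1 *: (schur_vec *m ctr schur_vec).
Proof.
move=> s0; set w := schur_vec; set s := schur_compl.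
have compr_herm : ctr (ctr E *m T *m E) = ctr E *m T *m E.
  by rewrite !ctrM ctrK T_herm mulmxA.
have w_ctr : ctr w = ctr e - ctr e *m T *m E *m compr_inv *m ctr E.
  by rewrite ctrD ctrN !ctrM ctrK T_herm /compr_inv ctr_inv compr_herm !mulmxA.
have compr_E : E *m ctr E *m T *m E *m compr_inv = E.
  rewrite -!mulmxA [ctr E *m _]mulmxA [ctr E *m T *m _]mulmxA.
  by rewrite /compr_inv mulmxV // mulmx1.
have T_inv : T *m (E *m compr_inv *m ctr E + s^-1 *: (w *m ctr w)) = 1%:M.
  rewrite mulmxDr -scalemxAr (mulmxA T w) T_schur_vec -scalemxAl scalerA.
  rewrite mulVf // scale1r w_ctr -[T *m _]mul1mx -{1}E_e_complete.
  rewrite mulmxDr mulmxDl !mulmxA.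
  rewrite compr_E -addrA -[RHS]E_e_complete; congr (_ + _).
  by rewrite mulmxN !mulmxA addrC subrK.
by rewrite -[invmx T]mulmx1 -T_inv mulKmx // (mulmx1_unit T_inv).1.
Qed.

End BorderedInverse.

Section LeadingCoordinates.
Variable C : numClosedFieldType.
Variable m : nat.

Definition Emb : 'M[C]_(m.+1, m) := \matrix_(i, j) (i == lift ord_max j)%:R.

Lemma mulmx_Emb p (A : 'M[C]_(p, m.+1)) i j :
  (A *m Emb) i j = A i (lift ord_max j).
Proof.
rewrite mxE (bigD1 (lift ord_max j)) //= big1 ?addr0.
  by rewrite mxE eqxx mulr1.
by move=> k /negbTE kj; rewrite !mxE kj mulr0.
Qed.

Lemma Emb_mulmx_lift p (B : 'M[C]_(m, p)) i k :
  (Emb *m B) (lift ord_max i) k = B i k.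
Proof.
rewrite mxE (bigD1 i) //= big1 ?addr0; first by rewrite mxE eqxx mul1r.
by move=> j /negbTE ji; rewrite mxE (inj_eq (@lift_inj _ _)) eq_sym ji mul0r.
Qed.

Lemma Emb_mulmx_max p (B : 'M[C]_(m, p)) k : (Emb *m B) ord_max k = 0.
Proof.
by rewrite mxE big1 // => j _; rewrite mxE (negbTE (neq_lift _ _)) mul0r.
Qed.

Lemma ctr_Emb i j : ctr Emb i j = (j == lift ord_max i)%:R.
Proof. by rewrite ctrE mxE rmorph_nat. Qed.

Lemma ctr_Emb_mulmx p (B : 'M[C]_(m.+1, p)) i j :
  (ctr Emb *m B) i j = B (lift ord_max i) j.
Proof.
rewrite mxE (bigD1 (lift ord_max i)) //= big1 ?addr0.
  by rewrite ctr_Emb eqxx mul1r.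
by move=> k /negbTE ki; rewrite ctr_Emb ki mul0r.
Qed.

Lemma Emb_perp : ctr Emb *m evec C ord_max = 0.
Proof.
apply: (can_inj (@ctrK _ _ _)); rewrite ctrM ctrK ctr_delta ctr0.
apply/matrixP=> i j; rewrite mulmx_Emb !mxE [_ == ord_max]eq_sym.
by rewrite (negbTE (neq_lift _ _)) andbF.
Qed.

Lemma Emb_complete :
  Emb *m ctr Emb + evec C ord_max *m ctr (evec C ord_max) = 1%:M.
Proof.
rewrite /evec ctr_delta mul_delta_mx; apply/matrixP=> i k.
rewrite mxE [delta_mx _ _ _ _]mxE [RHS]mxE.
case: (unliftP ord_max i) => [i'|] ->.
  rewrite Emb_mulmx_lift ctr_Emb [_ == ord_max]eq_sym.
  by rewrite (negbTE (neq_lift _ _)) addr0 eq_sym.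
by rewrite Emb_mulmx_max add0r eqxx eq_sym.
Qed.

End LeadingCoordinates.

Section RationalKrylov.
Variables (C : numClosedFieldType) (n : nat).
Variables (A : 'M[C]_n) (Cr : 'M[C]_(1, n)) (F : 'M[C]_n) (alpha : nat -> C).
Hypothesis alpha_inj : injective alpha.
Hypothesis alpha_re : forall j, 0 < 'Re (alpha j).
Hypothesis F_psd : psdmx F.

Lemma Vk_Emb m : Vk A Cr alpha m = Vk A Cr alpha m.+1 *m Emb C m.
Proof. by apply/matrixP=> i j; rewrite mulmx_Emb !mxE lift_max. Qed.

Lemma Tk_Emb m :
  Tk A Cr F alpha m = ctr (Emb C m) *m Tk A Cr F alpha m.+1 *m Emb C m.
Proof.
set V := Vk A Cr alpha m.+1; set E := Emb C m.
apply/matrixP=> i j; rewrite mulmx_Emb ctr_Emb_mulmx [LHS]mxE [RHS]mxE Vk_Emb.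
have -> : ctr (V *m E) *m F *m (V *m E) = ctr E *m (ctr V *m F *m V) *m E.
  by rewrite ctrM !mulmxA.
by rewrite mulmx_Emb ctr_Emb_mulmx !lift_max.
Qed.

Lemma Tk_den_neq0 (i j : nat) : (alpha i)^* + alpha j != 0.
Proof.
apply: contraTneq (addr_gt0 (alpha_re i) (alpha_re j)) => den0.
by rewrite -Re_conj -raddfD /= den0 raddf0 ltxx.
Qed.

Lemma Tk_herm k : ctr (Tk A Cr F alpha k) = Tk A Cr F alpha k.
Proof.
have [M_herm _] := psd_congr (Vk A Cr alpha k) F_psd.
apply/matrixP=> i j; rewrite ctrE [in LHS]mxE [in RHS]mxE.
rewrite rmorphM fmorphV !rmorphD /= conjCK rmorph1.
by rewrite -(ctrE (ctr _ *m F *m _)) M_herm [alpha j + _]addrC.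
Qed.

Lemma Tk_lyap k :
  ctr (diagC (fun i : 'I_k => alpha i)) *m Tk A Cr F alpha k
    + Tk A Cr F alpha k *m diagC (fun i : 'I_k => alpha i)
  = ctr (Vk A Cr alpha k) *m F *m Vk A Cr alpha k + ones C k *m ctr (ones C k).
Proof.
rewrite ctr_diagC /diagC mul_diag_mx mul_mx_diag.
apply/matrixP=> i j; rewrite !mxE big_ord1 ctrE !mxE rmorph1 mulr1.
by move: (Tk_den_neq0 i j) => den0; field.
Qed.

Lemma Tk_pd k : pdmx (Tk A Cr F alpha k).
Proof.
apply: (lyap_pd (a := fun i : 'I_k => alpha i)) (Tk_herm k) _ (Tk_lyap k).
- by move=> i j /alpha_inj /ord_inj.
- by move=> i; apply: alpha_re.
- exact: psd_congr.
Qed.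

(* [X_0 = 0] also fits the general formula, [V_0] being empty. *)
Lemma XkE k :
  Xk A Cr F alpha k
  = Vk A Cr alpha k *m invmx (Tk A Cr F alpha k) *m ctr (Vk A Cr alpha k).
Proof. by case: k => [|k] //=; rewrite [Vk _ _ _ 0]thinmx0 !mul0mx. Qed.

(* The increment [X_(m+1) - X_m] is [V_(m+1) l l^* V_(m+1)^*] where [l] is the
   Schur vector of [T_(m+1)] relative to its leading block [T_m], scaled by
   [(w^* T w)^(-1/2)]; its last entry is that scaling factor, hence nonzero. *)
Lemma Xk_increment m : exists l : 'cV[C]_m.+1,
  l ord_max 0 != 0
  /\ Xk A Cr F alpha m.+1 - Xk A Cr F alpha m
     = Vk A Cr alpha m.+1 *m l *m ctr l *m ctr (Vk A Cr alpha m.+1).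
Proof.
have compr_unit := pd_unit (@Tk_pd m); rewrite Tk_Emb in compr_unit.
set V := Vk A Cr alpha m.+1; set T := Tk A Cr F alpha m.+1.
set E := Emb C m; set e := evec C (@ord_max m).
set w := schur_vec T E e; set s := schur_compl T E e.
have w_last : w ord_max 0 = 1.
  by rewrite -evec_coord schur_vec_e ?Emb_perp ?evec_unit // mxE.
have w0 : w != 0.
  by apply: contra_eq_neq w_last => ->; rewrite mxE eq_sym oner_neq0.
have s_gt0 : 0 < s := Tk_pd w0.
have T_inv := bordered_inverse (Tk_herm _) (Emb_perp C m)
  (evec_unit _ _) (Emb_complete C m) compr_unit (lt0r_neq0 s_gt0).
exists (sqrtC s^-1 *: w); split.
  by rewrite mxE w_last mulr1 sqrtC_eq0 invr_eq0 gt_eqF.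
rewrite !XkE -/T T_inv /compr_inv (Tk_Emb m) (Vk_Emb m) -/V -/E ctrM.
rewrite mulmxDr mulmxDl !mulmxA addrAC subrr add0r.
by rewrite outer_sqrt_scale ?invr_ge0 ?(ltW s_gt0) // !mulmxA.
Qed.

End RationalKrylov.

(* k >= 1 is written k = m.+1; alpha j is alpha_{j+1} of the paper.  The
   invertibility hypothesis [Hinv] only makes [V_k] meaningful; the argument
   itself does not need it. *)
Theorem theorem6p2 (C : numClosedFieldType) (n : nat)
  (A : 'M[C]_n) (Cr : 'M[C]_(1, n)) (F : 'M[C]_n) (alpha : nat -> C)
  (Hdist : injective alpha)
  (Hre : forall j, 0 < 'Re (alpha j))
  (Hinv : forall j, (- ctr A + (alpha j)%:M) \in unitmx)
  (HF : psdmx F) :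
  forall m : nat,
    let V := Vk A Cr alpha m.+1 in
    let D := Xk A Cr F alpha m.+1 - Xk A Cr F alpha m in
    [/\ (exists l : 'cV[C]_(m.+1),
           l ord_max 0 != 0 /\ D = V *m l *m ctr l *m ctr V),
        (\rank D <= 1)%N,
        (\rank V = m.+1 -> \rank D = 1%N)
      & psdmx D].
Proof.
move=> m V D.
have [l [l_last D_l]] := Xk_increment A Cr Hdist Hre HF m.
have D_outer : D = (V *m l) *m ctr (V *m l) by rewrite /D D_l ctrM !mulmxA.
split; first by exists l.
- by rewrite D_outer rank_outer_le1.
- move=> V_rank; rewrite D_outer rank_outer_eq1 // full_col_rank_mul_neq0 //.
  by apply: contraNneq l_last => ->; rewrite mxE.
- by rewrite D_outer; apply: outer_psd.
Qed.
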